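(* The lattice $L=U+A_2+2E_8+A_1$ is achiral, i.e., for some cell $P$ of $\Lambda(L)$ there is an automorphism $g$ of $L$ with $g(P)=P$ which is $P$-reversing and $\mathbb{Z}/3$-direct.
   Context: $U$ has Gram matrix $\begin{pmatrix}0&1\\1&0\end{pmatrix}$; $A_1,A_2,E_8$ are positive definite root lattices; $+$ denotes orthogonal sum. For $L$: $V_k=\{v\in L:v^2=k,\ 2vw/v^2\in\mathbb{Z}\ \forall w\in L\}$ ($k=2,6$); $\Lambda(L)=\{x\in L\otimes\mathbb{R}:x^2<0\}/\mathbb{R}^*$; cells are closures of components of the complement of the hyperplanes $v^\perp$, $v\in V_2\cup V_6$. A cell $P$ lifts to two opposite pieces $\pm P^\sharp$ in $\{x^2<0\}/\mathbb{R}_{>0}$; $g$ with $g(P)=P$ is $P$-reversing if $g(P^\sharp)=-P^\sharp$. $g$ is $\mathbb{Z}/3$-direct if it acts trivially on the $3$-primary part ($\cong\mathbb{Z}/3$) of the discriminant group $L^*/L$. *)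

From HB Require Import structures.
From mathcomp Require Import all_boot all_order all_algebra.
From mathcomp Require Import all_classical all_reals all_analysis.
Set Implicit Arguments. Unset Strict Implicit. Unset Printing Implicit Defensive.
Import Order.TTheory GRing.Theory Num.Theory.
Import numFieldNormedType.Exports.
Local Open Scope ring_scope.
Local Open Scope classical_set_scope.

(* L = U + A_2 + 2E_8 + A_1 realised as Z^21 (row vectors) with Gram matrix
   gramL. Index layout: 0,1 : U ; 2,3 : A_2 ; 4..11 : E_8 ; 12..19 : E_8 ;
   20 : A_1. *)
Definition rkL := 21%N.

(* E_8 Cartan matrix, local indices 0..7 (Bourbaki labels 1..8 shifted):
   chain 0-2-3-4-5-6-7 and 1-3. *)
Definition e8_edge (a b : nat) : bool :=
  (a, b) \in [:: (0%N,2%N); (2%N,3%N); (3%N,4%N); (4%N,5%N); (5%N,6%N); (6%N,7%N); (1%N,3%N)].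

Definition e8 (a b : nat) : int :=
  if a == b then (2 : int) else if e8_edge a b || e8_edge b a then (-1 : int) else (0 : int).

Definition gram_entry (i j : nat) : int :=
  if (i < 2)%N && (j < 2)%N then (if i == j then (0 : int) else (1 : int))
  else if [&& (2 <= i < 4)%N & (2 <= j < 4)%N]
       then (if i == j then (2 : int) else (-1 : int))
  else if [&& (4 <= i < 12)%N & (4 <= j < 12)%N] then e8 (i - 4) (j - 4)
  else if [&& (12 <= i < 20)%N & (12 <= j < 20)%N]
       then e8 (i - 12) (j - 12)
  else if (i == 20%N) && (j == 20%N) then (2 : int)
  else (0 : int).

Definition gramL : 'M[int]_rkL := \matrix_(i < rkL, j < rkL) gram_entry i j.

Definition bL (v w : 'rV[int]_rkL) : int := (v *m gramL *m w^T) 0 0.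

Definition Vk (k : int) : set 'rV[int]_rkL :=
  [set v | bL v v = k /\ forall w, (k %| 2 * bL v w)%Z].

Definition bR (R : realType) (x y : 'rV[R]_rkL) : R :=
  (x *m map_mx intr gramL *m y^T) 0 0.

Definition negcone (R : realType) : set 'rV[R]_rkL := [set x | bR x x < 0].

Definition walls (R : realType) : set 'rV[R]_rkL :=
  [set x | exists v, (Vk 2 v \/ Vk 6 v) /\ bR (map_mx intr v) x = 0].

Definition is_chamber (R : realType) (C : set 'rV[R]_rkL) : Prop :=
  exists2 x, (@negcone R `\` @walls R) x &
             C = connected_component (@negcone R `\` @walls R) x.

(* the lift P# of the cell P = closure of the image of C: closure of C taken
   inside the cone {x^2<0} *)
Definition lift_cell (R : realType) (C : set 'rV[R]_rkL) : set 'rV[R]_rkL :=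
  closure C `&` @negcone R.

(* automorphisms of L (acting on row vectors on the right: x |-> x g) *)
Definition isAutL (g : 'M[int]_rkL) : Prop :=
  g \in unitmx /\ g *m gramL *m g^T = gramL.

Definition act_R (R : realType) (g : 'M[int]_rkL) (S : set 'rV[R]_rkL) :
  set 'rV[R]_rkL := (fun x => x *m map_mx intr g) @` S.

Definition neg_set (R : realType) (S : set 'rV[R]_rkL) : set 'rV[R]_rkL :=
  (fun x => - x) @` S.

(* Z/3-direct: trivial action on the 3-primary part of L^* / L *)
Definition is_int_rat (q : rat) : bool := denq q == 1.
Definition in_L (y : 'rV[rat]_rkL) : Prop := forall i, is_int_rat (y 0 i).
Definition in_dualL (y : 'rV[rat]_rkL) : Prop :=
  in_L (y *m map_mx intr gramL).

Definition Z3_direct (g : 'M[int]_rkL) : Prop :=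
  forall y : 'rV[rat]_rkL, in_dualL y ->
    (exists k : nat, in_L ((3%:R ^+ k) *: y)) ->
    in_L (y *m map_mx intr g - y).

(* An explicit involutive automorphism sigma of L acts on a
   basis of L (x) Q of type U + E_6 + E_6 + E_6 + A_1 as minus the exchange of
   the last two E_6 factors, and sigma - 1 = G X + 3 Y with G the Gram matrix
   and X, Y integral, so sigma fixes the 3-part of L^*/L.  The vector x whose
   basis coordinates are (-4 D, D) on U, powers 13, 13^2, ... of 13 on the
   E_6 factors (equal on the two exchanged ones) and 1 on A_1, with D = 13^13,
   satisfies x sigma = -x and x^2 < 0.  It lies on no wall: for a root v of
   norm 2 or 6 with v.x = 0, Cauchy-Schwarz against the very negative U-part of
   x kills one hyperbolic coordinate of v, so the definite part of v has norm
   at most 6 and all its coordinates are at most 3 in absolute value; then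
   v.x = 0 is a 13-adic expansion with small digits, all digits vanish, and
   6 v^2 becomes divisible by 8, which is absurd.  Hence y |-> -y sigma is a
   continuous involution of the cone preserving the walls and fixing x: it maps
   the chamber of x onto itself, i.e. sigma maps its lift P# to -P#. *)

From HB Require Import structures.
From mathcomp Require Import all_boot all_order all_algebra.
From mathcomp Require Import all_classical all_reals all_analysis.
From mathcomp Require Import zify ring.
Set Implicit Arguments. Unset Strict Implicit. Unset Printing Implicit Defensive.
Import Order.TTheory GRing.Theory Num.Theory.
Import numFieldNormedType.Exports.
Local Open Scope ring_scope.

(** * Integer quadratic forms *)

Lemma weighted_sqr6_ge0 (K X c1 c2 c3 c4 c5 c6 s1 s2 s3 s4 s5 s6 : int) :
  0 < K -> 0 <= c1 -> 0 <= c2 -> 0 <= c3 -> 0 <= c4 -> 0 <= c5 -> 0 <= c6 ->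
  K * X = c1 * s1 ^+ 2 + c2 * s2 ^+ 2 + c3 * s3 ^+ 2 + c4 * s4 ^+ 2
          + c5 * s5 ^+ 2 + c6 * s6 ^+ 2 ->
  0 <= X.
Proof.
move=> K_gt0 c1_ge0 c2_ge0 c3_ge0 c4_ge0 c5_ge0 c6_ge0 E.
by rewrite -(pmulr_rge0 _ K_gt0) E !addr_ge0 // mulr_ge0 // sqr_ge0.
Qed.

(* [3 x C^-1 x^T] for the Cartan matrix C of E_6 (Bourbaki labels: chain
   1-3-4-5-6, node 2 attached to 4): three times the norm of the vector of E_6^*
   whose pairings with the simple roots are x. *)
Definition e6dual3 (a b c d e f : int) : int :=
  4*a^+2 + 6*b^+2 + 10*c^+2 + 18*d^+2 + 10*e^+2 + 4*f^+2 +
  2*(3*a*b + 5*a*c + 6*a*d + 4*a*e + 2*a*f + 6*b*c + 9*b*d + 6*b*e + 3*b*f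
     + 12*c*d + 8*c*e + 4*c*f + 12*d*e + 6*d*f + 5*e*f).

Lemma e6dual3_ge0 a b c d e f : 0 <= e6dual3 a b c d e f.
Proof.
apply: (@weighted_sqr6_ge0 20 _ 5 3 3 5 10 30 (4*a+3*b+5*c+6*d+4*e+2*f)
  (5*b+3*c+6*d+4*e+2*f) (4*c+3*d+2*e+f) (3*d+2*e+f) (2*e+f) f) => //.
rewrite /e6dual3; ring.
Qed.

Lemma sqr_bound3 (x : int) : 3 * x ^+ 2 <= 36 -> -3 <= x <= 3.
Proof. nia. Qed.

Lemma e6dual3_coord_bound a b c d e f : 2 * e6dual3 a b c d e f <= 36 ->
  all (fun x => -3 <= x <= 3) [:: a; b; c; d; e; f].
Proof.
move=> q_small /=.
pose l1 : int := 4*a+3*b+5*c+6*d+4*e+2*f; pose l2 : int := 5*b+3*c+6*d+4*e+2*f.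
pose l3 : int := 4*c+3*d+2*e+f; pose l4 : int := 3*d+2*e+f.
rewrite !sqr_bound3 //; apply: (le_trans _ q_small); rewrite -subr_ge0.
- apply: (@weighted_sqr6_ge0 10 _ 5 3 3 5 10 0 l1 l2 l3 l4 (2*e+f) 0) => //.
  by rewrite /e6dual3 /l1 /l2 /l3 /l4; ring.
- apply: (@weighted_sqr6_ge0 10 _ 5 3 3 5 10 0 l1 l2 l3 l4 (e+2*f) 0) => //.
  by rewrite /e6dual3 /l1 /l2 /l3 /l4; ring.
- apply: (@weighted_sqr6_ge0 10 _ 5 3 3 15 30 0 l1 l2 l3 (d+2*e+f) f 0) => //.
  by rewrite /e6dual3 /l1 /l2 /l3; ring.
- apply: (@weighted_sqr6_ge0 10 _ 5 3 2 10 30 0 l1 l2 (3*c+6*d+4*e+2*f) (2*e+f) f 0) => //.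
  by rewrite /e6dual3 /l1 /l2; ring.
- apply: (@weighted_sqr6_ge0 2 _ 1 1 6 2 6 0 l1 (3*b+3*c+6*d+4*e+2*f) c (2*e+f) f 0) => //.
  by rewrite /e6dual3 /l1; ring.
- apply: (@weighted_sqr6_ge0 10 _ 2 3 5 10 30 0
    (5*a+6*b+10*c+12*d+8*e+4*f) (4*b+3*d+2*e+f) l4 (2*e+f) f 0) => //.
  by rewrite /e6dual3 /l4; ring.
Qed.

Lemma e6dual3_even a b c d e f : exists r, e6dual3 a b c d e f = 2 * r.
Proof.
exists (2*a^+2 + 3*b^+2 + 5*c^+2 + 9*d^+2 + 5*e^+2 + 2*f^+2 +
  (3*a*b + 5*a*c + 6*a*d + 4*a*e + 2*a*f + 6*b*c + 9*b*d + 6*b*e + 3*b*f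
     + 12*c*d + 8*c*e + 4*c*f + 12*d*e + 6*d*f + 5*e*f)).
by rewrite /e6dual3; ring.
Qed.

(* [6 y^2] for y in the dual of E_6 + E_6 + E_6 + A_1, where [p 2], ..., [p 20]
   are the pairings of y with the basis vectors; this is the definite part of
   the decomposition in [basisM] below. *)
Definition defnorm6 (p : nat -> int) : int :=
  2 * e6dual3 (p 2%N) (p 3%N) (p 4%N) (p 5%N) (p 6%N) (p 7%N)
  + 2 * e6dual3 (p 8%N) (p 9%N) (p 10%N) (p 11%N) (p 12%N) (p 13%N)
  + 2 * e6dual3 (p 14%N) (p 15%N) (p 16%N) (p 17%N) (p 18%N) (p 19%N)
  + 3 * p 20%N ^+ 2.

Lemma defnorm6_ge0 p : 0 <= defnorm6 p.
Proof.
have twice_ge0 a b c d e f : 0 <= 2 * e6dual3 a b c d e f.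
  by rewrite mulr_ge0 ?e6dual3_ge0.
have thrice_sqr_ge0 (z : int) : 0 <= 3 * z ^+ 2 by rewrite mulr_ge0 ?sqr_ge0.
by rewrite /defnorm6 !addr_ge0.
Qed.

Definition base_expand (W : int) (s : seq int) : int := foldr (fun d acc => d + W * acc) 0 s.

(* The 13 digits of the pairing with [xvec W] of a vector whose basis pairings
   are [p] (see [bL_xvec]); the two last E_6 blocks share their powers of W. *)
Definition digits (p : nat -> int) : seq int :=
  [:: p 20%N; p 2%N; p 3%N; p 4%N; p 5%N; p 6%N; p 7%N;
      p 8%N + p 14%N; p 9%N + p 15%N; p 10%N + p 16%N;
      p 11%N + p 17%N; p 12%N + p 18%N; p 13%N + p 19%N].

Lemma base_expand_eq0 (W t : int) (s : seq int) : 0 < W ->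
  all (fun d => - W < 2 * d < W) s -> W ^+ size s * t + base_expand W s = 0 ->
  t = 0 /\ all (fun d => d == 0) s.
Proof.
move=> W_gt0; elim: s => [|d s IHs] /=; first by rewrite expr0 mul1r addr0.
case/andP=> d_small s_small E.
have {}E : d + W * (W ^+ size s * t + base_expand W s) = 0 by rewrite -E exprS; ring.
have [-> rest0] : d = 0 /\ W ^+ size s * t + base_expand W s = 0.
  move: (W ^+ size s * t + base_expand W s) E => r E.
  have [r_lt0|r_gt0|r0] := ltrgtP r 0; [nia | nia | by move: E; rewrite r0 mulr0 addr0].
by have [-> ->] := IHs s_small rest0.
Qed.

Definition e6cartan (x1 x2 x3 x4 x5 x6 : int) : seq int :=
  [:: 2*x1 - x3; 2*x2 - x4; - x1 + 2*x3 - x4; - x2 - x3 + 2*x4 - x5;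
      - x4 + 2*x5 - x6; - x5 + 2*x6].

(* The basis pairings of the definite part of [xvec W]. *)
Definition xdual (W : int) (i : nat) : int :=
  nth 0 ([:: 0; 0] ++ e6cartan W (W^+2) (W^+3) (W^+4) (W^+5) (W^+6)
          ++ e6cartan (W^+7) (W^+8) (W^+9) (W^+10) (W^+11) (W^+12)
          ++ e6cartan (W^+7) (W^+8) (W^+9) (W^+10) (W^+11) (W^+12) ++ [:: 2]) i.

(* Cauchy-Schwarz for the definite part: [defnorm6] is nonnegative at
   [D p - p0 xdual W]. *)
Lemma defnorm6_shift_ge0 (W D p0 : int) (p : nat -> int) :
  0 <= D ^+ 2 * defnorm6 p - 12 * D * p0 * base_expand W (digits p)
       + p0 ^+ 2 * defnorm6 (xdual W).
Proof.
have := defnorm6_ge0 (fun i => D * p i - p0 * xdual W i).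
by congr (_ <= _); cbv [defnorm6 e6dual3 xdual e6cartan base_expand digits nth cat foldr]; ring.
Qed.

Lemma defnorm6_xdual_small :
  0 <= defnorm6 (xdual 13) /\ 4 * defnorm6 (xdual 13) < (13 ^+ 13) ^+ 2.
Proof. cbv [defnorm6 e6dual3 xdual e6cartan nth cat]; lia. Qed.

(* The U-part (-4 D, D) of [xvec] is so negative that a root pairing to zero
   with it cannot have a nonzero first hyperbolic coordinate. *)
Lemma hyperbolic_coord_eq0 (k D P p0 p1 Q l : int) :
  (k = 2 \/ k = 6) -> 0 < D -> 0 <= P -> 4 * P < D ^+ 2 ->
  6 * k = 12 * p0 * p1 + Q -> D * (p1 - 4 * p0) + l = 0 ->
  0 <= D ^+ 2 * Q - 12 * D * p0 * l + p0 ^+ 2 * P -> p0 = 0.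
Proof.
move=> k26 D_gt0 P_ge0 P_small normE pairE.
have -> : D ^+ 2 * Q - 12 * D * p0 * l + p0 ^+ 2 * P
          = 6 * k * D ^+ 2 - p0 ^+ 2 * (48 * D ^+ 2 - P).
  rewrite normE (_ : l = - (D * (p1 - 4 * p0))); first ring.
  lia.
have DD_gt0 : 0 < D ^+ 2 by rewrite exprn_gt0.
move: (D ^+ 2) DD_gt0 P_small => DD DD_gt0 P_small.
have [//|p0_neq0] := eqVneq p0 0.
have : 1 <= p0 ^+ 2 by nia.
move: (p0 ^+ 2) => s s_ge1; case: k26 => ->; nia.
Qed.

Lemma defnorm6_digits_small (p : nat -> int) : defnorm6 p <= 36 ->
  all (fun d => - 13 < 2 * d < 13) (digits p).
Proof.
move=> p_small.
have e1 := @e6dual3_ge0 (p 2%N) (p 3%N) (p 4%N) (p 5%N) (p 6%N) (p 7%N).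
have e2 := @e6dual3_ge0 (p 8%N) (p 9%N) (p 10%N) (p 11%N) (p 12%N) (p 13%N).
have e3 := @e6dual3_ge0 (p 14%N) (p 15%N) (p 16%N) (p 17%N) (p 18%N) (p 19%N).
have z20 := sqr_ge0 (p 20%N).
have /= := @e6dual3_coord_bound (p 2%N) (p 3%N) (p 4%N) (p 5%N) (p 6%N) (p 7%N).
have /= := @e6dual3_coord_bound (p 8%N) (p 9%N) (p 10%N) (p 11%N) (p 12%N) (p 13%N).
have /= := @e6dual3_coord_bound (p 14%N) (p 15%N) (p 16%N) (p 17%N) (p 18%N) (p 19%N).
have := @sqr_bound3 (p 20%N).
rewrite /defnorm6 in p_small; rewrite /digits /=; lia.
Qed.

Lemma defnorm6_digits_eq0 (p : nat -> int) : all (fun d => d == 0) (digits p) ->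
  defnorm6 p = 4 * e6dual3 (p 8%N) (p 9%N) (p 10%N) (p 11%N) (p 12%N) (p 13%N).
Proof.
rewrite /digits /= => digits0; rewrite /defnorm6.
have [-> -> -> -> ->] : [/\ p 20%N = 0, p 2%N = 0, p 3%N = 0, p 4%N = 0 & p 5%N = 0].
  by split; lia.
have [-> -> -> -> ->] : [/\ p 6%N = 0, p 7%N = 0, p 14%N = - p 8%N, p 15%N = - p 9%N
                          & p 16%N = - p 10%N].
  by split; lia.
have [-> -> ->] : [/\ p 17%N = - p 11%N, p 18%N = - p 12%N & p 19%N = - p 13%N].
  by split; lia.
by rewrite /e6dual3; ring.
Qed.

Lemma no_orthogonal_root_coords (k p0 p1 : int) (p : nat -> int) : (k = 2 \/ k = 6) ->
  6 * k = 12 * p0 * p1 + defnorm6 p ->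
  13 ^+ 13 * (p1 - 4 * p0) + base_expand 13 (digits p) = 0 -> False.
Proof.
move=> k26 normE pairE.
have D_gt0 : (0 : int) < 13 ^+ 13 by apply: exprn_gt0.
have p00 : p0 = 0.
  have [P_ge0 P_small] := defnorm6_xdual_small.
  exact: hyperbolic_coord_eq0 k26 D_gt0 P_ge0 P_small normE pairE (defnorm6_shift_ge0 _ _ _ _).
have p_small : defnorm6 p <= 36 by move: normE; rewrite p00; case: k26 => ->; lia.
have [_ digits0] := base_expand_eq0 (W := 13) isT (defnorm6_digits_small p_small) pairE.
have [r er] := @e6dual3_even (p 8%N) (p 9%N) (p 10%N) (p 11%N) (p 12%N) (p 13%N).
by move: normE; rewrite p00 defnorm6_digits_eq0 // er; case: k26 => ->; lia.
Qed.

(** * Matrix certificates *)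

(* Matrices of size [rkL] are given by integer tables, so that identities
   between them reduce to the boolean [fun_eqb], decided by [vm_compute]. *)
Definition tbl (l : seq (seq int)) (i j : nat) : int := nth 0 (nth [::] l i) j.
Definition mx_of (f : nat -> nat -> int) : 'M[int]_rkL := \matrix_(i < rkL, j < rkL) f i j.
Definition row_of (f : nat -> int) : 'rV[int]_rkL := \row_(j < rkL) f j.
Definition coord (r : 'rV[int]_rkL) (k : nat) : int := r 0 (inord k).

Definition fun_mul (f h : nat -> nat -> int) (i j : nat) : int :=
  foldr (fun k acc => f i k * h k j + acc) 0 (iota 0 rkL).
Definition fun_eqb (f h : nat -> nat -> int) : bool :=
  all (fun i => all (fun j => f i j == h i j) (iota 0 rkL)) (iota 0 rkL).

Lemma sum_rkL (F : nat -> int) :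
  \sum_(k < rkL) F k = foldr (fun k acc => F k + acc) 0 (iota 0 rkL).
Proof. by rewrite -(big_mkord xpredT) /index_iota subn0 unlock. Qed.

Lemma coordE (r : 'rV[int]_rkL) (i : 'I_rkL) : r 0 i = coord r i.
Proof. by rewrite /coord inord_val. Qed.

Lemma coord_row_of f k : (k < rkL)%N -> coord (row_of f) k = f k.
Proof. by move=> lt_k; rewrite /coord mxE inordK. Qed.

Lemma mx_of_eq f h : fun_eqb f h -> mx_of f = mx_of h.
Proof.
move=> /allP fh; apply/matrixP => i j; rewrite !mxE.
have := fh i; rewrite mem_iota ltn_ord => /(_ isT)/allP/(_ j).
by rewrite mem_iota ltn_ord => /(_ isT)/eqP.
Qed.

Lemma mul_mx_of f h : mx_of f *m mx_of h = mx_of (fun_mul f h).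
Proof.
apply/matrixP => i j; rewrite !mxE (eq_bigr (fun k : 'I_rkL => f i k * h k j)).
  exact: sum_rkL.
by move=> k _; rewrite !mxE.
Qed.

Lemma tr_mx_of f : (mx_of f)^T = mx_of (fun i j => f j i).
Proof. by apply/matrixP => i j; rewrite !mxE. Qed.

Lemma mx_of1 : 1%:M = mx_of (fun i j => (i == j)%:R).
Proof. by apply/matrixP => i j; rewrite !mxE. Qed.

Lemma quad_mx_of (r : 'rV[int]_rkL) f : (r *m mx_of f *m r^T) 0 0 =
  foldr (fun i acc =>
    foldr (fun j acc' => coord r j * f j i + acc') 0 (iota 0 rkL) * coord r i + acc)
  0 (iota 0 rkL).
Proof.
pose inner i := foldr (fun j acc' => coord r j * f j i + acc') 0 (iota 0 rkL).
rewrite mxE (eq_bigr (fun i : 'I_rkL => inner i * coord r i)); first exact: sum_rkL.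
move=> i _; rewrite !mxE coordE; congr (_ * _).
rewrite (eq_bigr (fun j : 'I_rkL => coord r j * f j i)); first exact: sum_rkL.
by move=> j _; rewrite !mxE coordE.
Qed.

Lemma pair_row_of (r : 'rV[int]_rkL) f :
  (r *m (row_of f)^T) 0 0 = foldr (fun i acc => coord r i * f i + acc) 0 (iota 0 rkL).
Proof.
rewrite mxE (eq_bigr (fun i : 'I_rkL => coord r i * f i)); first exact: sum_rkL.
by move=> i _; rewrite !mxE coordE.
Qed.

Definition sigma_tbl : seq (seq int) :=
 [:: [:: (-13); 12; 8; 4; (-6); (-9); (-12); (-18); (-15); (-12); (-12); 0; (-6); (-9); (-12); (-18); (-15); (-12); (-12); 0; 0];
  [:: 12; (-13); (-8); (-4); 6; 9; 12; 18; 15; 12; 12; 0; 6; 9; 12; 18; 15; 12; 12; 0; 0];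
  [:: (-12); 12; 7; 4; (-6); (-9); (-12); (-18); (-15); (-12); (-12); 0; (-6); (-9); (-12); (-18); (-15); (-12); (-12); 0; 0];
  [:: 0; 0; 0; (-1); 0; 0; 0; 0; 0; 0; 0; 0; 0; 0; 0; 0; 0; 0; 0; 0; 0];
  [:: 0; 0; 0; 0; 0; 0; 0; 0; 0; 0; 0; 0; (-1); 0; 0; 0; 0; 0; 0; 0; 0];
  [:: 0; 0; 0; 0; 0; 0; 0; 0; 0; 0; 0; 0; 0; 0; 0; 0; (-1); 0; 0; 0; 0];
  [:: 0; 0; 0; 0; 0; 0; 0; 0; 0; 0; 0; 0; 0; 0; (-1); 0; 0; 0; 0; 0; 0];
  [:: 0; 0; 0; 0; 0; 0; 0; 0; 0; 0; 0; 0; 0; 0; 0; (-1); 0; 0; 0; 0; 0];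
  [:: 0; 0; 0; 0; 0; 0; 0; 0; 0; 0; 0; 0; 0; (-1); 0; 0; 0; 0; 0; 0; 0];
  [:: (-3); 3; 2; 1; (-2); (-3); (-4); (-6); (-5); (-4); (-3); 0; (-1); (-1); (-2); (-3); (-3); (-3); (-3); 0; 0];
  [:: 12; (-12); (-8); (-4); 6; 9; 12; 18; 15; 12; 11; 0; 6; 9; 12; 18; 15; 12; 12; 0; 0];
  [:: (-12); 12; 8; 4; (-6); (-9); (-12); (-18); (-15); (-12); (-12); (-1); (-6); (-9); (-12); (-18); (-15); (-12); (-12); 0; 0];
  [:: 0; 0; 0; 0; (-1); 0; 0; 0; 0; 0; 0; 0; 0; 0; 0; 0; 0; 0; 0; 0; 0];
  [:: 0; 0; 0; 0; 0; 0; 0; 0; (-1); 0; 0; 0; 0; 0; 0; 0; 0; 0; 0; 0; 0];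
  [:: 0; 0; 0; 0; 0; 0; (-1); 0; 0; 0; 0; 0; 0; 0; 0; 0; 0; 0; 0; 0; 0];
  [:: 0; 0; 0; 0; 0; 0; 0; (-1); 0; 0; 0; 0; 0; 0; 0; 0; 0; 0; 0; 0; 0];
  [:: 0; 0; 0; 0; 0; (-1); 0; 0; 0; 0; 0; 0; 0; 0; 0; 0; 0; 0; 0; 0; 0];
  [:: (-3); 3; 2; 1; (-1); (-1); (-2); (-3); (-3); (-3); (-3); 0; (-2); (-3); (-4); (-6); (-5); (-4); (-3); 0; 0];
  [:: 12; (-12); (-8); (-4); 6; 9; 12; 18; 15; 12; 12; 0; 6; 9; 12; 18; 15; 12; 11; 0; 0];
  [:: (-12); 12; 8; 4; (-6); (-9); (-12); (-18); (-15); (-12); (-12); 0; (-6); (-9); (-12); (-18); (-15); (-12); (-12); (-1); 0];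
  [:: 0; 0; 0; 0; 0; 0; 0; 0; 0; 0; 0; 0; 0; 0; 0; 0; 0; 0; 0; 0; (-1)]].

Definition sigma := mx_of (tbl sigma_tbl).

Lemma sigma_invol : sigma *m sigma = 1%:M.
Proof. by rewrite mul_mx_of mx_of1; apply: mx_of_eq; vm_compute. Qed.

Lemma sigma_isometry : sigma *m gramL *m sigma^T = gramL.
Proof. by rewrite tr_mx_of !mul_mx_of; apply: mx_of_eq; vm_compute. Qed.

Definition adj6_tbl : seq (seq int) :=
 [:: [:: 0; 6; 0; 0; 0; 0; 0; 0; 0; 0; 0; 0; 0; 0; 0; 0; 0; 0; 0; 0; 0];
  [:: 6; 0; 0; 0; 0; 0; 0; 0; 0; 0; 0; 0; 0; 0; 0; 0; 0; 0; 0; 0; 0];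
  [:: 0; 0; 4; 2; 0; 0; 0; 0; 0; 0; 0; 0; 0; 0; 0; 0; 0; 0; 0; 0; 0];
  [:: 0; 0; 2; 4; 0; 0; 0; 0; 0; 0; 0; 0; 0; 0; 0; 0; 0; 0; 0; 0; 0];
  [:: 0; 0; 0; 0; 24; 30; 42; 60; 48; 36; 24; 12; 0; 0; 0; 0; 0; 0; 0; 0; 0];
  [:: 0; 0; 0; 0; 30; 48; 60; 90; 72; 54; 36; 18; 0; 0; 0; 0; 0; 0; 0; 0; 0];
  [:: 0; 0; 0; 0; 42; 60; 84; 120; 96; 72; 48; 24; 0; 0; 0; 0; 0; 0; 0; 0; 0];
  [:: 0; 0; 0; 0; 60; 90; 120; 180; 144; 108; 72; 36; 0; 0; 0; 0; 0; 0; 0; 0; 0];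
  [:: 0; 0; 0; 0; 48; 72; 96; 144; 120; 90; 60; 30; 0; 0; 0; 0; 0; 0; 0; 0; 0];
  [:: 0; 0; 0; 0; 36; 54; 72; 108; 90; 72; 48; 24; 0; 0; 0; 0; 0; 0; 0; 0; 0];
  [:: 0; 0; 0; 0; 24; 36; 48; 72; 60; 48; 36; 18; 0; 0; 0; 0; 0; 0; 0; 0; 0];
  [:: 0; 0; 0; 0; 12; 18; 24; 36; 30; 24; 18; 12; 0; 0; 0; 0; 0; 0; 0; 0; 0];
  [:: 0; 0; 0; 0; 0; 0; 0; 0; 0; 0; 0; 0; 24; 30; 42; 60; 48; 36; 24; 12; 0];
  [:: 0; 0; 0; 0; 0; 0; 0; 0; 0; 0; 0; 0; 30; 48; 60; 90; 72; 54; 36; 18; 0];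
  [:: 0; 0; 0; 0; 0; 0; 0; 0; 0; 0; 0; 0; 42; 60; 84; 120; 96; 72; 48; 24; 0];
  [:: 0; 0; 0; 0; 0; 0; 0; 0; 0; 0; 0; 0; 60; 90; 120; 180; 144; 108; 72; 36; 0];
  [:: 0; 0; 0; 0; 0; 0; 0; 0; 0; 0; 0; 0; 48; 72; 96; 144; 120; 90; 60; 30; 0];
  [:: 0; 0; 0; 0; 0; 0; 0; 0; 0; 0; 0; 0; 36; 54; 72; 108; 90; 72; 48; 24; 0];
  [:: 0; 0; 0; 0; 0; 0; 0; 0; 0; 0; 0; 0; 24; 36; 48; 72; 60; 48; 36; 18; 0];
  [:: 0; 0; 0; 0; 0; 0; 0; 0; 0; 0; 0; 0; 12; 18; 24; 36; 30; 24; 18; 12; 0];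
  [:: 0; 0; 0; 0; 0; 0; 0; 0; 0; 0; 0; 0; 0; 0; 0; 0; 0; 0; 0; 0; 3]].

Definition adj6 := mx_of (tbl adj6_tbl).

Lemma gramL_adj6 : gramL *m adj6 = 6%:M.
Proof.
have -> : 6%:M = mx_of (fun i j => 6 * (i == j)%:R).
  by apply/matrixP => i j; rewrite !mxE mulr_natr.
by rewrite mul_mx_of; apply: mx_of_eq; vm_compute.
Qed.

Definition sigmaX_tbl : seq (seq int) :=
 [:: [:: 0; 1; 1; 2; 0; 0; 0; 0; 0; 0; 0; 0; 0; 0; 0; 0; 0; 0; 0; 0; 0];
  [:: 1; 0; 2; 1; 0; 0; 0; 0; 0; 0; 0; 0; 0; 0; 0; 0; 0; 0; 0; 0; 0];
  [:: 0; 0; 0; 2; 0; 0; 0; 0; 0; 0; 0; 0; 0; 0; 0; 0; 0; 0; 0; 0; 0];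
  [:: 0; 0; 0; 0; 0; 0; 0; 0; 0; 0; 0; 0; 0; 0; 0; 0; 0; 0; 0; 0; 0];
  [:: 0; 0; 2; 1; 2; 1; 2; 2; 1; 0; 1; 2; 2; 1; 2; 2; 1; 0; 0; 0; 0];
  [:: 0; 0; 0; 0; 1; 1; 2; 0; 0; 0; 0; 0; 1; 0; 2; 0; 1; 0; 0; 0; 0];
  [:: 0; 0; 1; 2; 2; 2; 1; 1; 2; 0; 2; 1; 2; 2; 1; 1; 2; 0; 0; 0; 0];
  [:: 0; 0; 0; 0; 2; 0; 1; 0; 0; 0; 0; 0; 2; 0; 1; 0; 0; 0; 0; 0; 0];
  [:: 0; 0; 2; 1; 1; 0; 2; 0; 1; 0; 1; 2; 1; 1; 2; 0; 0; 0; 0; 0; 0];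
  [:: 0; 0; 1; 2; 0; 0; 0; 0; 0; 0; 2; 1; 0; 0; 0; 0; 0; 0; 0; 0; 0];
  [:: 0; 0; 1; 2; 1; 0; 2; 0; 1; 2; 0; 0; 0; 0; 0; 0; 0; 0; 0; 0; 0];
  [:: 0; 0; 0; 0; 2; 0; 1; 0; 2; 1; 0; 2; 0; 0; 0; 0; 0; 0; 0; 0; 0];
  [:: 0; 0; 2; 1; 2; 1; 2; 2; 1; 0; 0; 0; 2; 1; 2; 2; 1; 0; 1; 2; 0];
  [:: 0; 0; 0; 0; 1; 0; 2; 0; 1; 0; 0; 0; 1; 1; 2; 0; 0; 0; 0; 0; 0];
  [:: 0; 0; 1; 2; 2; 2; 1; 1; 2; 0; 0; 0; 2; 2; 1; 1; 2; 0; 2; 1; 0];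
  [:: 0; 0; 0; 0; 2; 0; 1; 0; 0; 0; 0; 0; 2; 0; 1; 0; 0; 0; 0; 0; 0];
  [:: 0; 0; 2; 1; 1; 1; 2; 0; 0; 0; 0; 0; 1; 0; 2; 0; 1; 0; 1; 2; 0];
  [:: 0; 0; 1; 2; 0; 0; 0; 0; 0; 0; 0; 0; 0; 0; 0; 0; 0; 0; 2; 1; 0];
  [:: 0; 0; 1; 2; 0; 0; 0; 0; 0; 0; 0; 0; 1; 0; 2; 0; 1; 2; 0; 0; 0];
  [:: 0; 0; 0; 0; 0; 0; 0; 0; 0; 0; 0; 0; 2; 0; 1; 0; 2; 1; 0; 2; 0];
  [:: 0; 0; 0; 0; 0; 0; 0; 0; 0; 0; 0; 0; 0; 0; 0; 0; 0; 0; 0; 0; 2]].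

Definition sigmaY_tbl : seq (seq int) :=
 [:: [:: (-5); 4; 2; 1; (-2); (-3); (-4); (-6); (-5); (-4); (-4); 0; (-2); (-3); (-4); (-6); (-5); (-4); (-4); 0; 0];
  [:: 4; (-5); (-3); (-2); 2; 3; 4; 6; 5; 4; 4; 0; 2; 3; 4; 6; 5; 4; 4; 0; 0];
  [:: (-4); 4; 2; 0; (-2); (-3); (-4); (-6); (-5); (-4); (-4); 0; (-2); (-3); (-4); (-6); (-5); (-4); (-4); 0; 0];
  [:: 0; 0; 0; 0; 0; 0; 0; 0; 0; 0; 0; 0; 0; 0; 0; 0; 0; 0; 0; 0; 0];
  [:: 0; 0; (-1); 0; (-1); 0; (-1); (-1); 0; 0; 0; (-1); (-1); 0; (-1); (-1); 0; 0; 0; 0; 0];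
  [:: 0; 0; 0; 0; 0; (-1); (-1); 0; 0; 0; 0; 0; 0; 0; (-1); 0; (-1); 0; 0; 0; 0];
  [:: 0; 0; 0; (-1); 0; (-1); 0; 0; (-1); 0; (-1); 0; 0; (-1); 0; 0; (-1); 0; 0; 0; 0];
  [:: 0; 0; 1; 1; 0; 1; 1; 0; 1; 0; 1; 1; 0; 1; 1; 0; 1; 0; 0; 0; 0];
  [:: 0; 0; (-1); 0; 0; 0; (-1); 0; (-1); 0; 0; (-1); 0; (-1); (-1); 0; 0; 0; 0; 0; 0];
  [:: (-1); 1; 1; 0; 0; (-1); 0; (-2); (-1); (-1); (-2); 0; 0; 0; 0; (-1); (-1); (-1); (-1); 0; 0];
  [:: 4; (-4); (-3); (-2); 2; 3; 3; 6; 5; 3; 4; 1; 2; 3; 4; 6; 5; 4; 4; 0; 0];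
  [:: (-4); 4; 3; 2; (-3); (-3); (-4); (-6); (-6); (-4); (-4); (-2); (-2); (-3); (-4); (-6); (-5); (-4); (-4); 0; 0];
  [:: 0; 0; (-1); 0; (-1); 0; (-1); (-1); 0; 0; 0; 0; (-1); 0; (-1); (-1); 0; 0; 0; (-1); 0];
  [:: 0; 0; 0; 0; 0; 0; (-1); 0; (-1); 0; 0; 0; 0; (-1); (-1); 0; 0; 0; 0; 0; 0];
  [:: 0; 0; 0; (-1); 0; (-1); 0; 0; (-1); 0; 0; 0; 0; (-1); 0; 0; (-1); 0; (-1); 0; 0];
  [:: 0; 0; 1; 1; 0; 1; 1; 0; 1; 0; 0; 0; 0; 1; 1; 0; 1; 0; 1; 1; 0];
  [:: 0; 0; (-1); 0; 0; (-1); (-1); 0; 0; 0; 0; 0; 0; 0; (-1); 0; (-1); 0; 0; (-1); 0];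
  [:: (-1); 1; 1; 0; 0; 0; 0; (-1); (-1); (-1); (-1); 0; 0; (-1); 0; (-2); (-1); (-1); (-2); 0; 0];
  [:: 4; (-4); (-3); (-2); 2; 3; 4; 6; 5; 4; 4; 0; 2; 3; 3; 6; 5; 3; 4; 1; 0];
  [:: (-4); 4; 3; 2; (-2); (-3); (-4); (-6); (-5); (-4); (-4); 0; (-3); (-3); (-4); (-6); (-6); (-4); (-4); (-2); 0];
  [:: 0; 0; 0; 0; 0; 0; 0; 0; 0; 0; 0; 0; 0; 0; 0; 0; 0; 0; 0; 0; (-2)]].

Definition sigmaX := mx_of (tbl sigmaX_tbl).
Definition sigmaY := mx_of (tbl sigmaY_tbl).

Lemma sigma_subr1 : sigma - 1%:M = gramL *m sigmaX + 3 *: sigmaY.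
Proof.
have -> : sigma - 1%:M = mx_of (fun i j => tbl sigma_tbl i j - (i == j)%:R).
  by apply/matrixP => i j; rewrite !mxE.
have -> : gramL *m sigmaX + 3 *: sigmaY =
          mx_of (fun i j => fun_mul gram_entry (tbl sigmaX_tbl) i j + 3 * tbl sigmaY_tbl i j).
  by rewrite mul_mx_of; apply/matrixP => i j; rewrite !mxE.
by apply: mx_of_eq; vm_compute.
Qed.

(* The rows of [basisM] are vectors of L forming a basis of L (x) Q, with Gram
   matrix [basis_gram] of type U + E_6 + E_6 + E_6 + A_1. *)
Definition basis_tbl : seq (seq int) :=
 [:: [:: (-3); 3; 2; 1; (-2); (-3); (-4); (-6); (-5); (-4); (-3); 0; (-2); (-3); (-4); (-6); (-5); (-4); (-3); 0; 0];
  [:: 18; (-18); (-11); (-6); 12; 18; 24; 36; 30; 24; 20; 0; 12; 18; 24; 36; 30; 24; 17; 0; 0];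
  [:: 4; (-4); (-2); (-1); 2; 3; 4; 6; 5; 4; 3; (-1); 2; 3; 4; 6; 5; 4; 3; (-1); 0];
  [:: 1; (-2); (-1); (-1); 0; 0; 0; 0; 0; 0; 0; (-1); 2; 3; 4; 6; 5; 4; 3; 1; 0];
  [:: (-2); 1; 1; 1; 0; 0; 0; 0; 0; 0; 0; 1; 0; 0; 0; 0; 0; 0; 0; 1; 0];
  [:: 1; 1; 0; 0; 0; 0; 0; 0; 0; 0; 0; 0; 0; 0; 0; 0; 0; 0; 0; 0; 0];
  [:: 2; (-3); (-2); (-1); 2; 3; 4; 6; 5; 4; 3; 0; 0; 0; 0; 0; 0; 0; 0; (-1); 0];
  [:: (-1); 1; 1; 0; 0; 0; 0; 0; 0; 0; 0; 1; 0; 0; 0; 0; 0; 0; 0; 0; 0];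
  [:: 3; (-3); (-2); (-1); 2; 3; 4; 6; 5; 4; 3; 0; 2; 3; 4; 6; 5; 5; 3; 0; 0];
  [:: 0; 0; 0; 0; 0; 0; 0; 0; 0; 0; 0; 0; 0; 1; 0; 0; 0; 0; 0; 0; 0];
  [:: 0; 0; 0; 0; 0; 0; 0; 0; 0; 0; 0; 0; 0; 0; 0; 0; 1; 0; 0; 0; 0];
  [:: 0; 0; 0; 0; 0; 0; 0; 0; 0; 0; 0; 0; 0; 0; 0; 1; 0; 0; 0; 0; 0];
  [:: 0; 0; 0; 0; 0; 0; 0; 0; 0; 0; 0; 0; 0; 0; 1; 0; 0; 0; 0; 0; 0];
  [:: 0; 0; 0; 0; 0; 0; 0; 0; 0; 0; 0; 0; 1; 0; 0; 0; 0; 0; 0; 0; 0];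
  [:: 6; (-6); (-4); (-2); 3; 4; 6; 9; 8; 7; 6; 0; 4; 6; 8; 12; 10; 8; 6; 0; 0];
  [:: 0; 0; 0; 0; 0; 0; 0; 0; 1; 0; 0; 0; 0; 0; 0; 0; 0; 0; 0; 0; 0];
  [:: 0; 0; 0; 0; 0; 1; 0; 0; 0; 0; 0; 0; 0; 0; 0; 0; 0; 0; 0; 0; 0];
  [:: 0; 0; 0; 0; 0; 0; 0; 1; 0; 0; 0; 0; 0; 0; 0; 0; 0; 0; 0; 0; 0];
  [:: 0; 0; 0; 0; 0; 0; 1; 0; 0; 0; 0; 0; 0; 0; 0; 0; 0; 0; 0; 0; 0];
  [:: 0; 0; 0; 0; 1; 0; 0; 0; 0; 0; 0; 0; 0; 0; 0; 0; 0; 0; 0; 0; 0];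
  [:: 0; 0; 0; 0; 0; 0; 0; 0; 0; 0; 0; 0; 0; 0; 0; 0; 0; 0; 0; 0; 1]].

Definition basis_gram_tbl : seq (seq int) :=
 [:: [:: 0; 1; 0; 0; 0; 0; 0; 0; 0; 0; 0; 0; 0; 0; 0; 0; 0; 0; 0; 0; 0];
  [:: 1; 0; 0; 0; 0; 0; 0; 0; 0; 0; 0; 0; 0; 0; 0; 0; 0; 0; 0; 0; 0];
  [:: 0; 0; 2; 0; (-1); 0; 0; 0; 0; 0; 0; 0; 0; 0; 0; 0; 0; 0; 0; 0; 0];
  [:: 0; 0; 0; 2; 0; (-1); 0; 0; 0; 0; 0; 0; 0; 0; 0; 0; 0; 0; 0; 0; 0];
  [:: 0; 0; (-1); 0; 2; (-1); 0; 0; 0; 0; 0; 0; 0; 0; 0; 0; 0; 0; 0; 0; 0];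
  [:: 0; 0; 0; (-1); (-1); 2; (-1); 0; 0; 0; 0; 0; 0; 0; 0; 0; 0; 0; 0; 0; 0];
  [:: 0; 0; 0; 0; 0; (-1); 2; (-1); 0; 0; 0; 0; 0; 0; 0; 0; 0; 0; 0; 0; 0];
  [:: 0; 0; 0; 0; 0; 0; (-1); 2; 0; 0; 0; 0; 0; 0; 0; 0; 0; 0; 0; 0; 0];
  [:: 0; 0; 0; 0; 0; 0; 0; 0; 2; 0; (-1); 0; 0; 0; 0; 0; 0; 0; 0; 0; 0];
  [:: 0; 0; 0; 0; 0; 0; 0; 0; 0; 2; 0; (-1); 0; 0; 0; 0; 0; 0; 0; 0; 0];
  [:: 0; 0; 0; 0; 0; 0; 0; 0; (-1); 0; 2; (-1); 0; 0; 0; 0; 0; 0; 0; 0; 0];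
  [:: 0; 0; 0; 0; 0; 0; 0; 0; 0; (-1); (-1); 2; (-1); 0; 0; 0; 0; 0; 0; 0; 0];
  [:: 0; 0; 0; 0; 0; 0; 0; 0; 0; 0; 0; (-1); 2; (-1); 0; 0; 0; 0; 0; 0; 0];
  [:: 0; 0; 0; 0; 0; 0; 0; 0; 0; 0; 0; 0; (-1); 2; 0; 0; 0; 0; 0; 0; 0];
  [:: 0; 0; 0; 0; 0; 0; 0; 0; 0; 0; 0; 0; 0; 0; 2; 0; (-1); 0; 0; 0; 0];
  [:: 0; 0; 0; 0; 0; 0; 0; 0; 0; 0; 0; 0; 0; 0; 0; 2; 0; (-1); 0; 0; 0];
  [:: 0; 0; 0; 0; 0; 0; 0; 0; 0; 0; 0; 0; 0; 0; (-1); 0; 2; (-1); 0; 0; 0];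
  [:: 0; 0; 0; 0; 0; 0; 0; 0; 0; 0; 0; 0; 0; 0; 0; (-1); (-1); 2; (-1); 0; 0];
  [:: 0; 0; 0; 0; 0; 0; 0; 0; 0; 0; 0; 0; 0; 0; 0; 0; 0; (-1); 2; (-1); 0];
  [:: 0; 0; 0; 0; 0; 0; 0; 0; 0; 0; 0; 0; 0; 0; 0; 0; 0; 0; (-1); 2; 0];
  [:: 0; 0; 0; 0; 0; 0; 0; 0; 0; 0; 0; 0; 0; 0; 0; 0; 0; 0; 0; 0; 2]].


Definition basisM := mx_of (tbl basis_tbl).
Definition basis_gram := mx_of (tbl basis_gram_tbl).

Lemma basis_gramE : basisM *m gramL *m basisM^T = basis_gram.
Proof. by rewrite tr_mx_of !mul_mx_of; apply: mx_of_eq; vm_compute. Qed.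

(* Exchange of the last two E_6 blocks of the basis. *)
Definition swap_tbl : seq (seq int) :=
 [:: [:: 1; 0; 0; 0; 0; 0; 0; 0; 0; 0; 0; 0; 0; 0; 0; 0; 0; 0; 0; 0; 0];
  [:: 0; 1; 0; 0; 0; 0; 0; 0; 0; 0; 0; 0; 0; 0; 0; 0; 0; 0; 0; 0; 0];
  [:: 0; 0; 1; 0; 0; 0; 0; 0; 0; 0; 0; 0; 0; 0; 0; 0; 0; 0; 0; 0; 0];
  [:: 0; 0; 0; 1; 0; 0; 0; 0; 0; 0; 0; 0; 0; 0; 0; 0; 0; 0; 0; 0; 0];
  [:: 0; 0; 0; 0; 1; 0; 0; 0; 0; 0; 0; 0; 0; 0; 0; 0; 0; 0; 0; 0; 0];
  [:: 0; 0; 0; 0; 0; 1; 0; 0; 0; 0; 0; 0; 0; 0; 0; 0; 0; 0; 0; 0; 0];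
  [:: 0; 0; 0; 0; 0; 0; 1; 0; 0; 0; 0; 0; 0; 0; 0; 0; 0; 0; 0; 0; 0];
  [:: 0; 0; 0; 0; 0; 0; 0; 1; 0; 0; 0; 0; 0; 0; 0; 0; 0; 0; 0; 0; 0];
  [:: 0; 0; 0; 0; 0; 0; 0; 0; 0; 0; 0; 0; 0; 0; 1; 0; 0; 0; 0; 0; 0];
  [:: 0; 0; 0; 0; 0; 0; 0; 0; 0; 0; 0; 0; 0; 0; 0; 1; 0; 0; 0; 0; 0];
  [:: 0; 0; 0; 0; 0; 0; 0; 0; 0; 0; 0; 0; 0; 0; 0; 0; 1; 0; 0; 0; 0];
  [:: 0; 0; 0; 0; 0; 0; 0; 0; 0; 0; 0; 0; 0; 0; 0; 0; 0; 1; 0; 0; 0];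
  [:: 0; 0; 0; 0; 0; 0; 0; 0; 0; 0; 0; 0; 0; 0; 0; 0; 0; 0; 1; 0; 0];
  [:: 0; 0; 0; 0; 0; 0; 0; 0; 0; 0; 0; 0; 0; 0; 0; 0; 0; 0; 0; 1; 0];
  [:: 0; 0; 0; 0; 0; 0; 0; 0; 1; 0; 0; 0; 0; 0; 0; 0; 0; 0; 0; 0; 0];
  [:: 0; 0; 0; 0; 0; 0; 0; 0; 0; 1; 0; 0; 0; 0; 0; 0; 0; 0; 0; 0; 0];
  [:: 0; 0; 0; 0; 0; 0; 0; 0; 0; 0; 1; 0; 0; 0; 0; 0; 0; 0; 0; 0; 0];
  [:: 0; 0; 0; 0; 0; 0; 0; 0; 0; 0; 0; 1; 0; 0; 0; 0; 0; 0; 0; 0; 0];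
  [:: 0; 0; 0; 0; 0; 0; 0; 0; 0; 0; 0; 0; 1; 0; 0; 0; 0; 0; 0; 0; 0];
  [:: 0; 0; 0; 0; 0; 0; 0; 0; 0; 0; 0; 0; 0; 1; 0; 0; 0; 0; 0; 0; 0];
  [:: 0; 0; 0; 0; 0; 0; 0; 0; 0; 0; 0; 0; 0; 0; 0; 0; 0; 0; 0; 0; 1]].

Definition swapM := mx_of (tbl swap_tbl).

Lemma basis_sigma : basisM *m sigma = - (swapM *m basisM).
Proof.
have -> : - (swapM *m basisM) = mx_of (fun i j => - fun_mul (tbl swap_tbl) (tbl basis_tbl) i j).
  by rewrite mul_mx_of; apply/matrixP => i j; rewrite !mxE.
by rewrite mul_mx_of; apply: mx_of_eq; vm_compute.
Qed.

(* [v *m coordM] lists the pairings of v with the basis, and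
   [dual6M = 6 basis_gram^-1]. *)
Definition coord_tbl : seq (seq int) :=
 [:: [:: 3; (-18); (-4); (-2); 1; 1; (-3); 1; (-3); 0; 0; 0; 0; 0; (-6); 0; 0; 0; 0; 0; 0];
  [:: (-3); 18; 4; 1; (-2); 1; 2; (-1); 3; 0; 0; 0; 0; 0; 6; 0; 0; 0; 0; 0; 0];
  [:: 3; (-16); (-3); (-1); 1; 0; (-3); 2; (-3); 0; 0; 0; 0; 0; (-6); 0; 0; 0; 0; 0; 0];
  [:: 0; (-1); 0; (-1); 1; 0; 0; (-1); 0; 0; 0; 0; 0; 0; 0; 0; 0; 0; 0; 0; 0];
  [:: 0; 0; 0; 0; 0; 0; 0; 0; 0; 0; 0; 0; 0; 0; 0; 0; 0; 0; (-1); 2; 0];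
  [:: 0; 0; 0; 0; 0; 0; 0; 0; 0; 0; 0; 0; 0; 0; (-1); 0; 2; (-1); 0; 0; 0];
  [:: 0; 0; 0; 0; 0; 0; 0; 0; 0; 0; 0; 0; 0; 0; 0; 0; 0; (-1); 2; (-1); 0];
  [:: 0; 0; 0; 0; 0; 0; 0; 0; 0; 0; 0; 0; 0; 0; 0; (-1); (-1); 2; (-1); 0; 0];
  [:: 0; 0; 0; 0; 0; 0; 0; 0; 0; 0; 0; 0; 0; 0; 0; 2; 0; (-1); 0; 0; 0];
  [:: 0; (-2); 0; 0; 0; 0; 0; 0; 0; 0; 0; 0; 0; 0; 0; (-1); 0; 0; 0; 0; 0];
  [:: (-2); 16; 3; 1; (-1); 0; 2; (-1); 2; 0; 0; 0; 0; 0; 5; 0; 0; 0; 0; 0; 0];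
  [:: 3; (-20); (-5); (-2); 2; 0; (-3); 2; (-3); 0; 0; 0; 0; 0; (-6); 0; 0; 0; 0; 0; 0];
  [:: 0; 0; 0; 0; 0; 0; 0; 0; 0; 0; 0; 0; (-1); 2; 0; 0; 0; 0; 0; 0; 0];
  [:: 0; 0; 0; 0; 0; 0; 0; 0; 0; 2; 0; (-1); 0; 0; 0; 0; 0; 0; 0; 0; 0];
  [:: 0; 0; 0; 0; 0; 0; 0; 0; 0; 0; 0; (-1); 2; (-1); 0; 0; 0; 0; 0; 0; 0];
  [:: 0; 0; 0; 0; 0; 0; 0; 0; 0; (-1); (-1); 2; (-1); 0; 0; 0; 0; 0; 0; 0; 0];
  [:: 0; 0; 0; 0; 0; 0; 0; 0; (-1); 0; 2; (-1); 0; 0; 0; 0; 0; 0; 0; 0; 0];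
  [:: 0; 1; 0; 0; 0; 0; 0; 0; 2; 0; (-1); 0; 0; 0; 0; 0; 0; 0; 0; 0; 0];
  [:: (-2); 10; 3; 1; (-1); 0; 1; 0; 1; 0; 0; 0; 0; 0; 4; 0; 0; 0; 0; 0; 0];
  [:: 3; (-17); (-5); (-1); 2; 0; (-2); 0; (-3); 0; 0; 0; 0; 0; (-6); 0; 0; 0; 0; 0; 0];
  [:: 0; 0; 0; 0; 0; 0; 0; 0; 0; 0; 0; 0; 0; 0; 0; 0; 0; 0; 0; 0; 2]].

Definition dual6_tbl : seq (seq int) :=
 [:: [:: 0; 6; 0; 0; 0; 0; 0; 0; 0; 0; 0; 0; 0; 0; 0; 0; 0; 0; 0; 0; 0];
  [:: 6; 0; 0; 0; 0; 0; 0; 0; 0; 0; 0; 0; 0; 0; 0; 0; 0; 0; 0; 0; 0];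
  [:: 0; 0; 8; 6; 10; 12; 8; 4; 0; 0; 0; 0; 0; 0; 0; 0; 0; 0; 0; 0; 0];
  [:: 0; 0; 6; 12; 12; 18; 12; 6; 0; 0; 0; 0; 0; 0; 0; 0; 0; 0; 0; 0; 0];
  [:: 0; 0; 10; 12; 20; 24; 16; 8; 0; 0; 0; 0; 0; 0; 0; 0; 0; 0; 0; 0; 0];
  [:: 0; 0; 12; 18; 24; 36; 24; 12; 0; 0; 0; 0; 0; 0; 0; 0; 0; 0; 0; 0; 0];
  [:: 0; 0; 8; 12; 16; 24; 20; 10; 0; 0; 0; 0; 0; 0; 0; 0; 0; 0; 0; 0; 0];
  [:: 0; 0; 4; 6; 8; 12; 10; 8; 0; 0; 0; 0; 0; 0; 0; 0; 0; 0; 0; 0; 0];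
  [:: 0; 0; 0; 0; 0; 0; 0; 0; 8; 6; 10; 12; 8; 4; 0; 0; 0; 0; 0; 0; 0];
  [:: 0; 0; 0; 0; 0; 0; 0; 0; 6; 12; 12; 18; 12; 6; 0; 0; 0; 0; 0; 0; 0];
  [:: 0; 0; 0; 0; 0; 0; 0; 0; 10; 12; 20; 24; 16; 8; 0; 0; 0; 0; 0; 0; 0];
  [:: 0; 0; 0; 0; 0; 0; 0; 0; 12; 18; 24; 36; 24; 12; 0; 0; 0; 0; 0; 0; 0];
  [:: 0; 0; 0; 0; 0; 0; 0; 0; 8; 12; 16; 24; 20; 10; 0; 0; 0; 0; 0; 0; 0];
  [:: 0; 0; 0; 0; 0; 0; 0; 0; 4; 6; 8; 12; 10; 8; 0; 0; 0; 0; 0; 0; 0];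
  [:: 0; 0; 0; 0; 0; 0; 0; 0; 0; 0; 0; 0; 0; 0; 8; 6; 10; 12; 8; 4; 0];
  [:: 0; 0; 0; 0; 0; 0; 0; 0; 0; 0; 0; 0; 0; 0; 6; 12; 12; 18; 12; 6; 0];
  [:: 0; 0; 0; 0; 0; 0; 0; 0; 0; 0; 0; 0; 0; 0; 10; 12; 20; 24; 16; 8; 0];
  [:: 0; 0; 0; 0; 0; 0; 0; 0; 0; 0; 0; 0; 0; 0; 12; 18; 24; 36; 24; 12; 0];
  [:: 0; 0; 0; 0; 0; 0; 0; 0; 0; 0; 0; 0; 0; 0; 8; 12; 16; 24; 20; 10; 0];
  [:: 0; 0; 0; 0; 0; 0; 0; 0; 0; 0; 0; 0; 0; 0; 4; 6; 8; 12; 10; 8; 0];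
  [:: 0; 0; 0; 0; 0; 0; 0; 0; 0; 0; 0; 0; 0; 0; 0; 0; 0; 0; 0; 0; 3]].

Definition coordM := mx_of (tbl coord_tbl).
Definition dual6M := mx_of (tbl dual6_tbl).

Lemma gramL_basis_coord : gramL *m basisM^T = coordM.
Proof. by rewrite tr_mx_of !mul_mx_of; apply: mx_of_eq; vm_compute. Qed.

Lemma coord_dual6 : coordM *m dual6M *m coordM^T = 6 *: gramL.
Proof.
have -> : 6 *: gramL = mx_of (fun i j => 6 * gram_entry i j).
  by apply/matrixP => i j; rewrite !mxE.
by rewrite tr_mx_of !mul_mx_of; apply: mx_of_eq; vm_compute.
Qed.

(** * The generic vector *)

Lemma six_bL (v : 'rV[int]_rkL) (p := coord (v *m coordM)) :
  6 * bL v v = 12 * p 0%N * p 1%N + defnorm6 p.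
Proof.
have -> : 6 * bL v v = (v *m coordM *m dual6M *m (v *m coordM)^T) 0 0.
  have -> : v *m coordM *m dual6M *m (v *m coordM)^T =
            v *m (coordM *m dual6M *m coordM^T) *m v^T by rewrite trmx_mul !mulmxA.
  by rewrite coord_dual6 -scalemxAr -scalemxAl mxE.
rewrite /dual6M quad_mx_of /p; move: (coord _) => q.
cbv [foldr iota tbl nth dual6_tbl rkL].
by rewrite /defnorm6 /e6dual3; ring.
Qed.

(* Coordinates of [xvec W] in the basis: W-adic on the definite part, equal on
   the two swapped E_6 blocks, and very negative on U. *)
Definition xcoords (W : int) : 'rV[int]_rkL :=
  row_of (nth 0 [:: -4 * W ^+ 13; W ^+ 13; W; W ^+ 2; W ^+ 3; W ^+ 4; W ^+ 5; W ^+ 6;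
                   W ^+ 7; W ^+ 8; W ^+ 9; W ^+ 10; W ^+ 11; W ^+ 12;
                   W ^+ 7; W ^+ 8; W ^+ 9; W ^+ 10; W ^+ 11; W ^+ 12; 1]).

Definition xvec (W : int) : 'rV[int]_rkL := xcoords W *m basisM.

Lemma bL_xvec (W : int) (v : 'rV[int]_rkL) (p := coord (v *m coordM)) :
  bL v (xvec W) = W ^+ 13 * (p 1%N - 4 * p 0%N) + base_expand W (digits p).
Proof.
rewrite /bL /xvec trmx_mul -!mulmxA (mulmxA gramL) gramL_basis_coord mulmxA.
rewrite pair_row_of /p; move: (coord _) => q.
by cbv [foldr iota nth rkL base_expand digits]; ring.
Qed.

Lemma bL_xvec_xvec (W : int) :
  6 * bL (xvec W) (xvec W) = - 48 * (W ^+ 13) ^+ 2 + defnorm6 (xdual W).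
Proof.
have -> : bL (xvec W) (xvec W) = (xcoords W *m basis_gram *m (xcoords W)^T) 0 0.
  by rewrite /bL /xvec trmx_mul -basis_gramE !mulmxA.
rewrite /basis_gram quad_mx_of; cbv [foldr iota tbl nth basis_gram_tbl rkL].
rewrite !coord_row_of //.
by cbv [nth defnorm6 e6dual3 xdual e6cartan cat]; ring.
Qed.

Lemma xcoords_swap (W : int) : xcoords W *m swapM = xcoords W.
Proof.
apply/rowP => j; rewrite !mxE.
set x := nth 0 _.
rewrite (eq_bigr (fun k : 'I_rkL => x k * tbl swap_tbl k j)); last by move=> k _; rewrite !mxE.
rewrite (sum_rkL (fun k => x k * tbl swap_tbl k j)).
case: j => j lt_j /=.
by do 21! (case: j lt_j => [|j] lt_j; first by cbv [foldr iota tbl nth swap_tbl rkL x]; ring).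
Qed.

Lemma xvec_sigma (W : int) : xvec W *m sigma = - xvec W.
Proof. by rewrite /xvec -mulmxA basis_sigma mulmxN mulmxA xcoords_swap. Qed.

Lemma xvec13_root_pairing_neq0 (v : 'rV[int]_rkL) :
  Vk 2 v \/ Vk 6 v -> bL v (xvec 13) <> 0.
Proof.
move=> vV pair0.
have k26 : bL v v = 2 \/ bL v v = 6 by case: vV => -[vv _]; [left | right].
apply: (no_orthogonal_root_coords k26 (six_bL v)).
exact: etrans (esym (bL_xvec 13 v)) pair0.
Qed.

Lemma xvec13_neg : bL (xvec 13) (xvec 13) < 0.
Proof.
have := bL_xvec_xvec 13; have [P_ge0 P_small] := defnorm6_xdual_small.
by move: (defnorm6 (xdual 13)) ((13 ^+ 13) ^+ 2) P_ge0 P_small => P DD; lia.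
Qed.

(** * Action on the discriminant group *)

Lemma in_LP (y : 'rV[rat]_rkL) : in_L y <-> forall i, y 0 i \is a Num.int.
Proof. by split=> yL i; have := yL i; rewrite /is_int_rat Qint_def. Qed.

Lemma in_L_mulmx (y : 'rV[rat]_rkL) (M : 'M[int]_rkL) :
  in_L y -> in_L (y *m map_mx intr M).
Proof.
move=> /in_LP yL; apply/in_LP => i; rewrite mxE; apply: rpred_sum => j _.
by rewrite mxE rpredM ?yL ?intr_int.
Qed.

Lemma in_L_add (y z : 'rV[rat]_rkL) : in_L y -> in_L z -> in_L (y + z).
Proof. by move=> /in_LP yL /in_LP zL; apply/in_LP => i; rewrite mxE rpredD. Qed.

Lemma Qint_three_mul (q : rat) (k : nat) :
  6 * q \is a Num.int -> 3%:R ^+ k * q \is a Num.int -> 3 * q \is a Num.int.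
Proof.
move=> q6 q3k; case: k q3k => [|k] q3k.
  by rewrite expr0 mul1r in q3k; rewrite rpredM // (intr_int _ 3).
have [m Em] : exists m, (3 ^ k)%N = m.*2.+1.
  by exists (3 ^ k)./2; rewrite -[LHS]odd_double_half oddX orbT add1n.
have -> : 3 * q = 3%:R ^+ k.+1 * q - m%:R * (6 * q).
  by rewrite exprS -natrX Em -[m.*2.+1]addn1 -mul2n natrD natrM; ring.
by rewrite rpredB // rpredM ?rpred_nat.
Qed.

Lemma sigma_Z3_direct : Z3_direct sigma.
Proof.
move=> y yG [k y3k].
have y6 : in_L (6 *: y).
  have := in_L_mulmx adj6 yG.
  rewrite -mulmxA -map_mxM gramL_adj6 map_scalar_mx mul_mx_scalar.
  by move=> /in_LP y6; apply/in_LP => i; have := y6 i; rewrite !mxE.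
have y3 : in_L (3 *: y).
  move/in_LP: y6 => y6; move/in_LP: y3k => y3k; apply/in_LP => i.
  by rewrite mxE (Qint_three_mul (k := k)); have := y6 i; have := y3k i; rewrite !mxE.
have -> : y *m map_mx intr sigma - y =
    (y *m map_mx intr gramL) *m map_mx intr sigmaX + (3 *: y) *m map_mx intr sigmaY.
  rewrite -[y in _ - y]mulmx1 -mulmxBr -(map_mx1 intr) -map_mxB sigma_subr1.
  by rewrite map_mxD map_mxM map_mxZ mulmxDr mulmxA -scalemxAr scalemxAl.
by apply: in_L_add; apply: in_L_mulmx.
Qed.

(** * Chambers reversed by an involution *)

Local Open Scope classical_set_scope.

Lemma image_closure_sub (T U : topologicalType) (f : T -> U) (A : set T) :
  continuous f -> f @` closure A `<=` closure (f @` A).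
Proof.
move=> f_cont _ [x clAx <-] B fxB.
have [y [Ay fyB]] := clAx _ (f_cont x B fxB).
by exists (f y); split => //; exists y.
Qed.

Lemma mulmx_continuous (R : realType) (n : nat) (M : 'M[R]_n) :
  continuous (fun y : 'rV[R]_n => y *m M).
Proof.
have -> : (fun y : 'rV[R]_n => y *m M) =
          (fun y => \sum_(k <- index_enum 'I_n) y 0 k *: row k M).
  by apply: funext => y; rewrite mulmx_sum_row.
elim: (index_enum 'I_n) => [|k s IHs] y.
  rewrite (_ : (fun z : 'rV[R]_n => _) = fun=> 0); first exact: cst_continuous.
  by apply: funext => z; rewrite big_nil.
rewrite (_ : (fun z : 'rV[R]_n => _) =
             fun z => z 0 k *: row k M + \sum_(j <- s) z 0 j *: row j M).
  apply: continuousD (IHs y); apply: continuousZr_tmp; exact: coord_continuous.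
by apply: funext => z; rewrite big_cons.
Qed.

Lemma involutive_image (T : Type) (f : T -> T) (S : set T) :
  involutive f -> f @` S `<=` S -> f @` S = S.
Proof.
move=> fK fS; apply/seteqP; split=> // y Sy.
by exists (f y); [apply: fS; exists y | exact: fK].
Qed.

Lemma connected_component_image_sub (T : topologicalType) (A : set T) (f : T -> T) (x : T) :
  continuous f -> f @` A `<=` A -> A x -> f x = x ->
  f @` connected_component A x `<=` connected_component A x.
Proof.
move=> f_cont fA Ax fx; apply: connected_component_max.
- by exists x; [exact: connected_component_refl | exact: fx].
- by move=> _ [y /connected_component_sub Ay <-]; apply: fA; exists y.
- apply: connected_continuous_connected; first exact: component_connected.
  exact: continuous_subspaceT.
Qed.

Lemma closureI_image_sub (T : topologicalType) (C N : set T) (f : T -> T) :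
  continuous f -> f @` C `<=` C -> f @` N `<=` N ->
  f @` (closure C `&` N) `<=` closure C `&` N.
Proof.
move=> f_cont fC fN _ [y [clCy Ny] <-]; split; last by apply: fN; exists y.
by apply: (closureS fC); apply: image_closure_sub => //; exists y.
Qed.

Lemma bR_map_mx (R : realType) (v w : 'rV[int]_rkL) :
  bR (map_mx intr v) (map_mx intr w) = (bL v w)%:~R :> R.
Proof. by rewrite /bR /bL map_trmx -!map_mxM mxE. Qed.

Lemma bRNr (R : realType) (x y : 'rV[R]_rkL) : bR x (- y) = - bR x y.
Proof. by rewrite /bR linearN /= mulmxN mxE. Qed.

Lemma bRNl (R : realType) (x y : 'rV[R]_rkL) : bR (- x) y = - bR x y.
Proof. by rewrite /bR !mulNmx mxE. Qed.

Section InvolutiveIsometry.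

Variable R : realType.
Variable g : 'M[int]_rkL.
Hypotheses (g_invol : g *m g = 1%:M) (g_isom : g *m gramL *m g^T = gramL).

Lemma gramL_trmx : gramL *m g^T = g *m gramL.
Proof. by rewrite -[LHS]mul1mx -g_invol -mulmxA (mulmxA g gramL) g_isom. Qed.

Lemma bL_mulmxl (v w : 'rV[int]_rkL) : bL (v *m g) w = bL v (w *m g).
Proof. by rewrite /bL trmx_mul -(mulmxA v) -gramL_trmx !mulmxA. Qed.

Lemma Vk_mulmx (k : int) (v : 'rV[int]_rkL) : Vk k v -> Vk k (v *m g).
Proof.
by case=> vv vw; split=> [|w]; rewrite bL_mulmxl // -mulmxA g_invol mulmx1.
Qed.

Definition rev_act (y : 'rV[R]_rkL) : 'rV[R]_rkL := - (y *m map_mx intr g).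

Lemma rev_actK : involutive rev_act.
Proof.
by move=> y; rewrite /rev_act mulNmx opprK -mulmxA -map_mxM g_invol map_mx1 mulmx1.
Qed.

Lemma rev_act_continuous : continuous rev_act.
Proof.
have -> : rev_act = (fun y => y *m - map_mx intr g) by apply: funext => y; rewrite mulmxN.
exact: mulmx_continuous.
Qed.

Lemma bR_rev_act (y z : 'rV[R]_rkL) : bR (rev_act y) (rev_act z) = bR y z.
Proof.
rewrite /rev_act bRNl bRNr opprK /bR trmx_mul map_trmx.
suff -> : y *m map_mx intr g *m map_mx intr gramL *m (map_mx intr g^T *m z^T) =
          y *m map_mx intr (g *m gramL *m g^T) *m z^T by rewrite g_isom.
by rewrite !map_mxM !mulmxA.
Qed.

Lemma bR_rev_act_map (v : 'rV[int]_rkL) (y : 'rV[R]_rkL) :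
  bR (map_mx intr v) (rev_act y) = - bR (map_mx intr (v *m g)) y.
Proof.
rewrite /rev_act bRNr /bR trmx_mul !mulmxA map_trmx -!map_mxM.
by rewrite -(mulmxA v) gramL_trmx mulmxA.
Qed.

Lemma rev_act_chamber_domain :
  rev_act @` (@negcone R `\` @walls R) `<=` (@negcone R `\` @walls R).
Proof.
move=> _ [y [y_neg y_wall] <-]; split; first by rewrite /negcone /= bR_rev_act.
case=> v [vV v_perp]; apply: y_wall; exists (v *m g); split.
  by case: vV => vV; [left | right]; apply: Vk_mulmx.
by apply: oppr_inj; rewrite oppr0 -bR_rev_act_map.
Qed.

Variable x : 'rV[int]_rkL.
Hypotheses (x_anti : x *m g = - x) (x_neg : bL x x < 0)
  (x_generic : forall v, Vk 2 v \/ Vk 6 v -> bL v x <> 0).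

Definition chamber_of : set 'rV[R]_rkL :=
  connected_component (@negcone R `\` @walls R) (map_mx intr x).

Lemma chamber_domain_x : (@negcone R `\` @walls R) (map_mx intr x).
Proof.
split; first by rewrite /negcone /= bR_map_mx ltrz0.
by case=> v [vV]; rewrite bR_map_mx => /eqP; rewrite intr_eq0 => /eqP; exact: x_generic.
Qed.

Lemma is_chamber_of : is_chamber chamber_of.
Proof. by exists (map_mx intr x); first exact: chamber_domain_x. Qed.

Lemma rev_act_x : rev_act (map_mx intr x) = map_mx intr x.
Proof. by rewrite /rev_act -map_mxM x_anti map_mxN opprK. Qed.

Lemma rev_act_lift_cell : rev_act @` lift_cell chamber_of = lift_cell chamber_of.
Proof.
apply: involutive_image; first exact: rev_actK.
apply: closureI_image_sub; first exact: rev_act_continuous.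
  exact: connected_component_image_sub rev_act_continuous rev_act_chamber_domain
    chamber_domain_x rev_act_x.
by move=> _ [y y_neg <-]; rewrite /negcone /= bR_rev_act.
Qed.

Lemma act_lift_cell : act_R g (lift_cell chamber_of) = neg_set (lift_cell chamber_of).
Proof.
rewrite /neg_set -[in RHS]rev_act_lift_cell image_comp /act_R.
by apply: eq_imagel => y _; rewrite /= /rev_act opprK.
Qed.

Lemma act_neg_lift_cell :
  act_R g (neg_set (lift_cell chamber_of)) = lift_cell chamber_of.
Proof.
rewrite /act_R /neg_set image_comp -[in RHS]rev_act_lift_cell.
by apply: eq_imagel => y _; rewrite /= /rev_act mulNmx.
Qed.

End InvolutiveIsometry.

Theorem corollary7p7p2 (R : realType) :
  exists C : set 'rV[R]_rkL, is_chamber C /\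
  exists g : 'M[int]_rkL,
    [/\ isAutL g,
        act_R g (lift_cell C `|` neg_set (lift_cell C)) =
          lift_cell C `|` neg_set (lift_cell C),
        act_R g (lift_cell C) = neg_set (lift_cell C)
      & Z3_direct g].
Proof.
have chamberP := is_chamber_of R xvec13_neg xvec13_root_pairing_neq0.
have act_P := act_lift_cell R sigma_invol sigma_isometry (xvec_sigma 13)
  xvec13_neg xvec13_root_pairing_neq0.
have act_negP := act_neg_lift_cell R sigma_invol sigma_isometry (xvec_sigma 13)
  xvec13_neg xvec13_root_pairing_neq0.
exists (chamber_of (xvec 13)); split => //; exists sigma; split => //.
- by split; [exact: (mulmx1_unit sigma_invol).1 | exact: sigma_isometry].
- by rewrite /act_R image_setU -!/(act_R _ _) act_P act_negP setUC.
- exact: sigma_Z3_direct.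
Qed.
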